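(* Every regular element $\gamma\in\mathfrak{t}(F)$ is conjugate under the Weyl group $W=\mathfrak{S}_d$ to at least one element in minimal form.
   Context: $F=k((\epsilon))$ with $\mathrm{val}(\epsilon)=1$; $G=\mathrm{GL}_d$, $T$ the diagonal torus, $\mathfrak{t}$ its Lie algebra; $W=\mathfrak{S}_d$ acts by permuting diagonal entries. For $\gamma=\mathrm{diag}(\gamma_1,\dots,\gamma_d)$, $\alpha_{i,j}(\gamma)=\gamma_i-\gamma_j$ and $\alpha_l=\alpha_{l,l+1}$. A regular $\gamma\in\mathfrak{t}(F)$ is in minimal form if $\mathrm{val}(\alpha_{i,j}(\gamma))=\min_{i\le l\le j-1}\mathrm{val}(\alpha_l(\gamma))$ for all $1\le i<j\le d$. *)

From HB Require Import structures.
From mathcomp Require Import all_boot all_order all_algebra all_fingroup.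
From Stdlib Require Import ClassicalEpsilon.
Set Implicit Arguments. Unset Strict Implicit. Unset Printing Implicit Defensive.
Import Order.TTheory GRing.Theory Num.Theory.
Local Open Scope ring_scope.

(* F = k((eps)): formal Laurent series over a field k, represented by their
   coefficient functions int -> k with support bounded below.
   The coefficient of eps^n of x is (val x) n. *)
Definition laurent (k : fieldType) :=
  {f : int -> k | exists N : int, forall n : int, n < N -> f n = 0}.

Definition lsub (k : fieldType) (x y : laurent k) : laurent k.
Proof.
exists (fun n => proj1_sig x n - proj1_sig y n).
case: (proj2_sig x) => N1 H1; case: (proj2_sig y) => N2 H2.
exists (Num.min N1 N2) => n; rewrite lt_min => /andP[h1 h2].
by rewrite H1 // H2 // subr0.
Defined.

(* the eps-adic valuation, with values in int extended by +oo (= None):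
   val x = Some n iff n is the least index with nonzero coefficient;
   val 0 = None (= +oo). *)
Definition is_val (k : fieldType) (x : laurent k) (v : option int) : Prop :=
  match v with
  | None => forall n, proj1_sig x n = 0
  | Some n => proj1_sig x n != 0 /\ forall m, m < n -> proj1_sig x m = 0
  end.

Definition lval (k : fieldType) (x : laurent k) : option int :=
  epsilon (inhabits None) (is_val x).

Definition omin (a b : option int) : option int :=
  match a, b with
  | None, _ => b
  | _, None => a
  | Some m, Some n => Some (Num.min m n)
  end.

(* an element gamma = diag(gamma_0, ..., gamma_{d-1}) of t(F) (0-indexed) *)
Definition alpha (k : fieldType) (d : nat) (g : 'I_d -> laurent k) (i j : 'I_d) :=
  lsub (g i) (g j).

(* regular: all roots alpha_{i,j}(g) = g_i - g_j, i <> j, are nonzero,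
   i.e. the diagonal entries are pairwise distinct *)
Definition regular (k : fieldType) (d : nat) (g : 'I_d -> laurent k) : Prop :=
  forall i j : 'I_d, i != j -> g i <> g j.

Definition alpha_simple (k : fieldType) (d : nat) (g : 'I_d -> laurent k)
  (l : nat) : option int :=
  match insub l, insub l.+1 with
  | Some i, Some j => lval (@alpha k d g i j)
  | _, _ => None
  end.

Definition minimal_form (k : fieldType) (d : nat) (g : 'I_d -> laurent k) : Prop :=
  forall i j : 'I_d, (i < j)%N ->
    lval (alpha g i j) = \big[omin/None]_(i <= l < j) alpha_simple g l.

Definition weyl_act (k : fieldType) (d : nat) (w : {perm 'I_d})
  (g : 'I_d -> laurent k) : 'I_d -> laurent k := fun i => g (w i).

From mathcomp Require Import all_boot all_order all_algebra all_fingroup.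
From mathcomp Require Import zify.
From Stdlib Require Import ClassicalEpsilon FunctionalExtensionality ProofIrrelevance.
Set Implicit Arguments. Unset Strict Implicit. Unset Printing Implicit Defensive.
Import Order.TTheory GRing.Theory Num.Theory.
Local Open Scope ring_scope.

(* Sort the diagonal entries lexicographically by their coefficient sequences;
   since k need not be ordered, the coefficients of eps^n are compared through
   their first position among the finitely many values occurring at index n.
   If gamma_i precedes gamma_j and n = val(gamma_i - gamma_j) is the first index
   where they differ, then every gamma_l in between agrees with both below n.
   Hence each simple root alpha_l, i <= l < j, has valuation at least n, and as
   the coefficient of eps^n changes somewhere between i and j, one of them has
   valuation exactly n. *)

Definition ole (n : int) (o : option int) : Prop :=
  if o is Some m then n <= m else True.

Section Valuation.
Variable k : fieldType.
Implicit Types (x y : laurent k) (f : int -> k).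

Definition lcoef x : int -> k := proj1_sig x.

Definition agree x y (n : int) := forall m, m < n -> lcoef x m = lcoef y m.

Lemma agree_sym x y n : agree x y n -> agree y x n.
Proof. by move=> xy m /xy. Qed.

Lemma agree_trans x y z n : agree x y n -> agree y z n -> agree x z n.
Proof. by move=> xy yz m mn; rewrite xy // yz. Qed.

Lemma laurent_ext x y : lcoef x =1 lcoef y -> x = y.
Proof.
move=> e; apply: eq_sig_hprop => [f p q|]; first exact: proof_irrelevance.
exact: functional_extensionality.
Qed.

Lemma exists_least_nonzero f N m :
  (forall n, n < N -> f n = 0) -> f m != 0 ->
  exists n, f n != 0 /\ forall m, m < n -> f m = 0.
Proof.
move=> f0 fm; pose P (j : nat) := f (N + j%:Z) != 0.
have [j0 Pj0] : exists j, P j.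
  exists `|m - N|%N; rewrite /P; have -> // : N + `|m - N|%N = m.
  suff : N <= m by lia.
  by rewrite leNgt; apply: contra fm => /f0 ->.
case: (ex_minnP (ex_intro P j0 Pj0)) => j Pj minj.
exists (N + j%:Z); split=> // m' lt_m'; case: (ltP m' N) => [/f0 //|le_Nm'].
apply/eqP; apply: contraTT lt_m' => nz; rewrite -leNgt.
suff : (j <= `|m' - N|)%N by lia.
by apply: minj; rewrite /P; have -> : N + `|m' - N|%N = m' by lia.
Qed.

Lemma lval_spec x : is_val x (lval x).
Proof.
rewrite /lval; apply: epsilon_spec.
have [x0|[m xm]] : (forall n, lcoef x n = 0) \/ exists m, lcoef x m != 0.
- case: (classic (exists m, lcoef x m != 0)) => [|no_m]; [by right|left].
  by move=> n; case: (eqVneq (lcoef x n) 0) => // ?; case: no_m; exists n.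
- by exists None.
- case: (proj2_sig x) => N x0; have [n ?] := exists_least_nonzero x0 xm.
  by exists (Some n).
Qed.

Lemma lval_eq x v : is_val x v -> lval x = v.
Proof.
have := lval_spec x; case: (lval x) => [n|]; case: v => [m|] //=.
- move=> [xn ltn] [xm ltm]; case: (ltgtP n m) => [/ltm|/ltn|->//].
    by move/eqP: xn.
  by move/eqP: xm.
- by move=> [xn _] x0; rewrite x0 eqxx in xn.
- by move=> x0 [xm _]; rewrite x0 eqxx in xm.
Qed.

Lemma lval_sub_Some x y n :
  agree x y n -> lcoef x n != lcoef y n -> lval (lsub x y) = Some n.
Proof.
move=> xy xny; apply: lval_eq; split=> [|m /xy xym]; first by rewrite /= subr_eq0.
by apply/eqP; rewrite subr_eq0; apply/eqP.
Qed.

Lemma lval_sub_ge x y n : agree x y n -> ole n (lval (lsub x y)).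
Proof.
move=> xy; have := lval_spec (lsub x y); case: lval => [m [xym _]|_] //=.
by rewrite leNgt; apply: contra xym => /xy /= e; rewrite subr_eq0; apply/eqP.
Qed.

Lemma first_difference x y :
  x <> y -> exists n, agree x y n /\ lcoef x n != lcoef y n.
Proof.
move=> xy; have := lval_spec (lsub x y); case: lval => [n [xyn below]|x0].
  exists n; split; last by rewrite -subr_eq0.
  by move=> m /below /eqP /=; rewrite subr_eq0 => /eqP.
by case: xy; apply: laurent_ext => n; apply/eqP; rewrite -subr_eq0; apply/eqP/x0.
Qed.

End Valuation.

Lemma ole_omin n a b : ole n a -> ole n b -> ole n (omin a b).
Proof. by case: a b => [a|] [b|] //=; rewrite le_min => -> ->. Qed.

Lemma omin_SomeL n a : ole n a -> omin (Some n) a = Some n.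
Proof. by case: a => //= a /min_idPl ->. Qed.

Lemma omin_SomeR n a : ole n a -> omin a (Some n) = Some n.
Proof. by case: a => //= a /min_idPr ->. Qed.

Lemma big_omin_ge (I : eqType) n (r : seq I) (F : I -> option int) :
  (forall l, l \in r -> ole n (F l)) -> ole n (\big[omin/None]_(l <- r) F l).
Proof. by move=> Fr; rewrite big_seq; apply: big_ind => //; apply: ole_omin. Qed.

Lemma big_omin_eq (I : eqType) n (r : seq I) (F : I -> option int) :
  (forall l, l \in r -> ole n (F l)) -> (exists2 l, l \in r & F l = Some n) ->
  \big[omin/None]_(l <- r) F l = Some n.
Proof.
elim: r => [|a r IH] Fr [l //]; rewrite big_cons in_cons => /predU1P[->|lr] Fl.
  rewrite Fl omin_SomeL //; apply: big_omin_ge => l' l'r.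
  by apply: Fr; rewrite in_cons l'r orbT.
rewrite IH; [exact/omin_SomeR/Fr/mem_head| |by exists l].
by move=> l' l'r; apply: Fr; rewrite in_cons l'r orbT.
Qed.

Lemma exists_adjacent_neq (T : eqType) (f : nat -> T) i j :
  (i <= j)%N -> f i != f j -> exists2 l, (i <= l < j)%N & f l != f l.+1.
Proof.
elim: j => [|j IH]; first by rewrite leqn0 => /eqP->; rewrite eqxx.
rewrite leq_eqVlt => /predU1P[->|le_ij]; first by rewrite eqxx.
case: (eqVneq (f j) (f j.+1)) => [<- fij|fj _]; last by exists j => //; lia.
by have [l il fl] := IH le_ij fij; exists l => //; lia.
Qed.

Lemma big_omin_lval_adjacent (k : fieldType) (x : nat -> laurent k) i j n :
  (i < j)%N -> (forall l, (i <= l <= j)%N -> agree (x i) (x l) n) ->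
  lcoef (x i) n != lcoef (x j) n ->
  \big[omin/None]_(i <= l < j) lval (lsub (x l) (x l.+1)) = Some n.
Proof.
move=> lt_ij near xij.
have adj l : (i <= l < j)%N -> agree (x l) (x l.+1) n.
  by move=> /andP[il lj]; apply: agree_trans (agree_sym (near l _)) (near l.+1 _); lia.
apply: big_omin_eq => [l|].
  by rewrite mem_index_iota => /adj; apply: lval_sub_ge.
have [l il xl] := exists_adjacent_neq (f := fun l => lcoef (x l) n) (ltnW lt_ij) xij.
by exists l; [rewrite mem_index_iota | apply: lval_sub_Some (adj l il) xl].
Qed.

Section LexicographicOrder.
Variables (k : fieldType) (T : finType) (x : T -> laurent k).

Definition coef_rank (n : int) (a : T) : nat :=
  index (lcoef (x a) n) [seq lcoef (x t) n | t <- enum T].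

Lemma coef_rank_eq n a b :
  lcoef (x a) n = lcoef (x b) n -> coef_rank n a = coef_rank n b.
Proof. by rewrite /coef_rank => ->. Qed.

Lemma coef_rank_inj n a b :
  coef_rank n a = coef_rank n b -> lcoef (x a) n = lcoef (x b) n.
Proof.
have mem c : lcoef (x c) n \in [seq lcoef (x t) n | t <- enum T].
  by apply: map_f; rewrite mem_enum.
by move=> e; rewrite -(nth_index 0 (mem a)) -(nth_index 0 (mem b)); congr nth.
Qed.

Lemma coef_rank_lt_neq n a b :
  (coef_rank n a < coef_rank n b)%N -> lcoef (x a) n != lcoef (x b) n.
Proof. by move=> lt_ab; apply/eqP => /coef_rank_eq e; rewrite e ltnn in lt_ab. Qed.

Definition lex_lt a b :=
  exists n, agree (x a) (x b) n /\ (coef_rank n a < coef_rank n b)%N.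

Lemma lex_lt_irr a : ~ lex_lt a a.
Proof. by case=> n [_]; rewrite ltnn. Qed.

Lemma lex_lt_trans a b c : lex_lt a b -> lex_lt b c -> lex_lt a c.
Proof.
move=> [p [ab_p ab]] [q [bc_q bc]]; case: (ltgtP p q) => [pq|qp|pq].
- exists p; split; last by rewrite -(coef_rank_eq (bc_q p pq)).
  by apply: agree_trans ab_p _ => m mp; apply: bc_q (lt_trans mp pq).
- exists q; split; last by rewrite (coef_rank_eq (ab_p q qp)).
  by apply: agree_trans _ bc_q => m mq; apply: ab_p (lt_trans mq qp).
- by subst q; exists p; split; [apply: agree_trans ab_p bc_q | apply: ltn_trans ab bc].
Qed.

Lemma lex_lt_total a b : x a <> x b -> lex_lt a b \/ lex_lt b a.
Proof.
move=> /first_difference [n [ab_n abn]].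
case: (ltngtP (coef_rank n a) (coef_rank n b)) => [lt_ab|lt_ba|/coef_rank_inj e].
- by left; exists n.
- by right; exists n; split; first apply: agree_sym.
- by rewrite e eqxx in abn.
Qed.

Lemma lex_lt_between a b c n :
  lex_lt a b -> lex_lt b c -> agree (x a) (x c) n -> agree (x a) (x b) n.
Proof.
move=> [p [ab_p ab]] [q [bc_q bc]] ac; case: (leP n p) => [np|pn].
  by move=> m mn; apply: ab_p (lt_le_trans mn np).
have ac_p := coef_rank_eq (ac p pn); case: (ltgtP p q) => [pq|qp|pq].
- by move: ab; rewrite ac_p (coef_rank_eq (bc_q p pq)) ltnn.
- move: bc; rewrite -(coef_rank_eq (ab_p q qp)).
  by rewrite (coef_rank_eq (ac q (lt_trans qp pn))) ltnn.
- by subst q; move: (ltn_trans ab bc); rewrite ac_p ltnn.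
Qed.

End LexicographicOrder.

Section SortingPermutation.
Variables (d : nat) (lt : 'I_d -> 'I_d -> Prop).
Hypotheses (lt_irr : forall a, ~ lt a a)
  (lt_trans : forall a b c, lt a b -> lt b c -> lt a c)
  (lt_total : forall a b, a != b -> lt a b \/ lt b a).

Let ltb a b : bool := if excluded_middle_informative (lt a b) then true else false.

Let ltbP a b : reflect (lt a b) (ltb a b).
Proof. by rewrite /ltb; case: excluded_middle_informative => h; constructor. Qed.

Let rank a := #|[set b | ltb b a]|.

Let rank_lt a : (rank a < d)%N.
Proof.
rewrite -[X in (_ < X)%N]card_ord -cardsT; apply: proper_card.
by rewrite properT; apply/eqP => /setP /(_ a); rewrite !inE => /ltbP /lt_irr.
Qed.

Let rank_mono a b : lt a b -> (rank a < rank b)%N.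
Proof.
move=> ab; apply: proper_card; apply/properP; split.
  by apply/subsetP => c; rewrite !inE => /ltbP ca; apply/ltbP; apply: lt_trans ca ab.
by exists a; rewrite !inE; [apply/ltbP | apply/ltbP/lt_irr].
Qed.

Let rank_inj : injective (fun a => Ordinal (rank_lt a)).
Proof.
move=> a b /(congr1 val) /= e; apply/eqP; apply: contraT => ab.
by case: (lt_total ab) => /rank_mono; rewrite e ltnn.
Qed.

Lemma exists_sorting_perm :
  exists w : {perm 'I_d}, forall i j : 'I_d, (i < j)%N -> lt (w i) (w j).
Proof.
pose p := perm rank_inj; exists p^-1%g => i j ij.
have pE a : val (p a) = rank a by rewrite permE.
have rankK c : rank (p^-1%g c) = c by rewrite -pE permKV.
have : p^-1%g i != p^-1%g j by rewrite (inj_eq (@perm_inj _ _)) neq_ltn ij.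
by case/lt_total => // /rank_mono; rewrite !rankK ltnNge (ltnW ij).
Qed.

End SortingPermutation.

Lemma alpha_simpleE (k : fieldType) (d : nat) (g : 'I_d -> laurent k) (i0 : 'I_d) l :
  (l.+1 < d)%N -> alpha_simple g l = lval (alpha g (insubd i0 l) (insubd i0 l.+1)).
Proof.
move=> ld; rewrite /alpha_simple /insubd.
case: insubP => [a _ _|/negP[]]; last exact: ltnW.
by case: insubP => [b _ _|/negP[]].
Qed.

Theorem mainTheorem18 (k : fieldType) (d : nat) (g : 'I_d -> laurent k) :
  regular g -> exists w : {perm 'I_d}, minimal_form (weyl_act w g).
Proof.
move=> reg.
have lex_total a b : a != b -> lex_lt g a b \/ lex_lt g b a.
  by move=> /reg; apply: lex_lt_total.
have [w sorted] := exists_sorting_perm (@lex_lt_irr _ _ g) (@lex_lt_trans _ _ g) lex_total.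
exists w => i j ij; set h := weyl_act w g.
have [n [hij_n rank_ij]] := sorted i j ij.
have between (o : 'I_d) : (i <= o <= j)%N -> agree (h i) (h o) n.
  case/andP; case: (ltngtP i o) => // [io _|/val_inj <- _ _]; last by [].
  case: (ltngtP o j) => // [oj _|/val_inj -> _]; last exact: hij_n.
  exact: lex_lt_between (sorted _ _ io) (sorted _ _ oj) hij_n.
rewrite (lval_sub_Some hij_n (coef_rank_lt_neq rank_ij)).
have adjE l : (i <= l < j)%N ->
    alpha_simple h l = lval (lsub (h (insubd i l)) (h (insubd i l.+1))).
  by case/andP=> _ lj; apply: alpha_simpleE; apply: leq_ltn_trans lj (ltn_ord j).
rewrite (eq_big_nat _ _ adjE); symmetry.
apply: (big_omin_lval_adjacent (x := fun l => h (insubd i l))) => //.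
- move=> l il; rewrite valKd; apply: between.
  by rewrite val_insubd; case: ifP => // _; rewrite leqnn ltnW.
- by rewrite !valKd; apply: coef_rank_lt_neq rank_ij.
Qed.
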